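(* Let $\{A_1,A_2,A_3\}$ be a gyrobarycentrically independent set in the Einstein gyrovector space $\mathbb{R}^n_s$, with gyroangles $\alpha_1,\alpha_2,\alpha_3$ and defect $\delta=\pi-\alpha_1-\alpha_2-\alpha_3$, and write $\gamma_{ij}=\gamma_{\ominus A_i\oplus A_j}$. Set $m_1=(\gamma_{12}+\gamma_{13}-\gamma_{23}-1)(\gamma_{23}-1)$, $m_2=(\gamma_{12}-\gamma_{13}+\gamma_{23}-1)(\gamma_{13}-1)$, $m_3=(-\gamma_{12}+\gamma_{13}+\gamma_{23}-1)(\gamma_{12}-1)$, and let $O\in\mathbb{R}^n$ be the point $$O=\frac{m_1\gamma_{A_1}A_1+m_2\gamma_{A_2}A_2+m_3\gamma_{A_3}A_3}{m_1\gamma_{A_1}+m_2\gamma_{A_2}+m_3\gamma_{A_3}}.$$ Then: (i) $O$ is the circumgyrocenter of gyrotriangle $A_1A_2A_3$ (when the latter exists); (ii) the coordinates $(m_1:m_2:m_3)$ are equivalently (up to a common nonzero factor) $(\cos(\alpha_1+\tfrac\delta2)\sin\alpha_1:\cos(\alpha_2+\tfrac\delta2)\sin\alpha_2:\cos(\alpha_3+\tfrac\delta2)\sin\alpha_3)$; (iii) the constant $m_O$ defined by $m_O^2=m_1^2+m_2^2+m_3^2+2(m_1m_2\gamma_{12}+m_1m_3\gamma_{13}+m_2m_3\gamma_{23})$ satisfies $$m_O^2=\{(\gamma_{12}+\gamma_{13}+\gamma_{23}-1)^2-2(\gamma_{12}^2+\gamma_{13}^2+\gamma_{23}^2-1)\}(1+2\gamma_{12}\gamma_{13}\gamma_{23}-\gamma_{12}^2-\gamma_{13}^2-\gamma_{23}^2)=D_3(D_3-H_3),$$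 where $D_3=\det\begin{pmatrix}1&\gamma_{12}&\gamma_{13}\\\gamma_{12}&1&\gamma_{23}\\\gamma_{13}&\gamma_{23}&1\end{pmatrix}$ and $H_3=2(\gamma_{12}-1)(\gamma_{13}-1)(\gamma_{23}-1)$; (iv) $O\in\mathbb{R}^n_s$ if and only if $m_O^2>0$, which is equivalent to each of the following mutually equivalent inequalities: $\sin(2\alpha_1+\tfrac\delta2)+\sin(2\alpha_2+\tfrac\delta2)+\sin(2\alpha_3+\tfrac\delta2)>3\sin\tfrac\delta2$; $\sin(\alpha_1+\tfrac\delta2)\sin(\alpha_2+\tfrac\delta2)\sin(\alpha_3+\tfrac\delta2)>\sin\tfrac\delta2$; $(\gamma_{12}+\gamma_{13}+\gamma_{23}-1)^2>2(\gamma_{12}^2+\gamma_{13}^2+\gamma_{23}^2-1)$; $4(\gamma_{12}-1)(\gamma_{13}-1)>(\gamma_{12}+\gamma_{13}-\gamma_{23}-1)^2$.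
   Context: Fix $s>0$, $n\ge2$; $\mathbb{R}^n_s=\{v\in\mathbb{R}^n:\|v\|<s\}$ with Einstein addition $u\oplus v=\frac{1}{1+u\cdot v/s^2}\{u+\frac{1}{\gamma_u}v+\frac{1}{s^2}\frac{\gamma_u}{1+\gamma_u}(u\cdot v)u\}$, $\gamma_v=(1-\|v\|^2/s^2)^{-1/2}$, $\ominus v=-v$. Gyrodistance between $A,B$: $\|\ominus A\oplus B\|$. $\{A_1,A_2,A_3\}$ is gyrobarycentrically independent if $\ominus A_1\oplus A_2,\ominus A_1\oplus A_3$ are linearly independent. Gyroangle $\alpha_1$ of gyrotriangle $A_1A_2A_3$ at $A_1$: $\cos\alpha_1=\frac{(\ominus A_1\oplus A_2)\cdot(\ominus A_1\oplus A_3)}{\|\ominus A_1\oplus A_2\|\|\ominus A_1\oplus A_3\|}$, similarly $\alpha_2,\alpha_3$. The circumgyrocenter of gyrotriangle $A_1A_2A_3$ is the point of $(A_1\oplus\mathrm{span}\{\ominus A_1\oplus A_2,\ominus A_1\oplus A_3\})\cap\mathbb{R}^n_s$ equigyrodistant from $A_1,A_2,A_3$ (it need not exist). Gyrobarycentric coordinates are homogeneous: only their ratios matter. *)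

From HB Require Import structures.
From mathcomp Require Import all_boot all_order all_algebra.
From mathcomp Require Import all_classical all_reals all_analysis.
Set Implicit Arguments. Unset Strict Implicit. Unset Printing Implicit Defensive.
Import Order.TTheory GRing.Theory Num.Theory.
Local Open Scope ring_scope.

Section Einstein.
Variable R : realType.
Variable n : nat.
Implicit Types (s : R) (u v : 'rV[R]_n).

Definition dotv u v : R := \sum_(i < n) u 0 i * v 0 i.
Definition normv v : R := Num.sqrt (dotv v v).

Definition in_ball s v : Prop := normv v < s.

Definition gam s v : R := (Num.sqrt (1 - dotv v v / s ^+ 2))^-1.

Definition eadd s u v : 'rV[R]_n :=
  (1 + dotv u v / s ^+ 2)^-1 *:
    (u + (gam s u)^-1 *: v
       + (s ^+ 2)^-1 * (gam s u / (1 + gam s u)) * dotv u v *: u).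

Definition gvec s (A B : 'rV[R]_n) : 'rV[R]_n := eadd s (- A) B.

Definition gdist s (A B : 'rV[R]_n) : R := normv (gvec s A B).

Definition lin_indep2 u v : Prop :=
  forall a b : R, a *: u + b *: v = 0 -> a = 0 /\ b = 0.

Definition gyro_independent s (A1 A2 A3 : 'rV[R]_n) : Prop :=
  lin_indep2 (gvec s A1 A2) (gvec s A1 A3).

Definition gangle s (A1 A2 A3 : 'rV[R]_n) : R :=
  acos (dotv (gvec s A1 A2) (gvec s A1 A3) /
        (normv (gvec s A1 A2) * normv (gvec s A1 A3))).

Definition is_circumgyrocenter s (A1 A2 A3 P : 'rV[R]_n) : Prop :=
  (exists a b : R,
      in_ball s (a *: gvec s A1 A2 + b *: gvec s A1 A3) /\
      P = eadd s A1 (a *: gvec s A1 A2 + b *: gvec s A1 A3)) /\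
  in_ball s P /\
  gdist s P A1 = gdist s P A2 /\ gdist s P A2 = gdist s P A3.

End Einstein.

(* the 3x3 Gram-type matrix [[1,g12,g13],[g12,1,g23],[g13,g23,1]] *)
Definition gmat3 (R : realType) (g12 g13 g23 : R) : 'M[R]_3 :=
  \matrix_(i < 3, j < 3)
    (if i == j then 1
     else if (i + j == 1)%N then g12
     else if (i + j == 2)%N then g13
     else g23).

From HB Require Import structures.
From mathcomp Require Import all_boot all_order all_algebra.
From mathcomp Require Import all_classical all_reals all_analysis.
From mathcomp Require Import ring lra.
Import Order.TTheory GRing.Theory Num.Theory.
Local Open Scope ring_scope.

Set Implicit Arguments. Unset Strict Implicit. Unset Printing Implicit Defensive.

(* By the
   gyrotrigonometric law of cosines cos a1 = (g12 g13 - g23) / (sqrt (g12^2 - 1)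
   sqrt (g13^2 - 1)), and each sine is sqrt D3 over the same kind of product, where the
   Gram determinant D3 is positive by the strict Cauchy-Schwarz inequality for the two
   independent gyrovectors.  Expanding sin and cos of a1 + a2 + a3 = pi - del turns
   2 sin (del/2) cos (ai + del/2) sin ai into a common positive multiple of mi, which
   gives (ii) and, through product-to-sum identities, the trigonometric forms of (iv).
   On the vector side, for a gyrobarycentric combination P of A1 A2 A3 with coordinates
   (l1 : l2 : l3) the gamma factor of (-)P(+)X is linear in the li.  Equigyrodistance is
   then a linear system whose matrix is the Gram matrix of the gammas, and its solution
   is proportional to (m1 : m2 : m3).  Finally the Lorentz norm of sum li gam(Ai) (1, Ai)
   is the quadratic form mO2 = D3 * (m1 + m2 + m3), so O lies in the ball iff mO2 > 0. *)

Section Trigonometry.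
Variable R : realType.
Implicit Types x y H : R.

Lemma sin_gt0_lt_pi x : 0 < x < 2 * pi -> 0 < sin x -> x < pi.
Proof.
move=> /andP[x0 x2pi] sx; rewrite ltNge; apply/negP => pix.
have : 0 <= sin (x - pi) by apply: sin_ge0_pi; apply/andP; split; lra.
rewrite sinB sinpi cospi; lra.
Qed.

Lemma cos_add_gt0_lt_pi x y : 0 <= x <= pi -> 0 <= y <= pi ->
  0 < cos x + cos y -> x + y < pi.
Proof.
move=> /andP[x0 x1] /andP[y0 y1] h.
have : cos (pi - y) < cos x by rewrite cosB cospi sinpi mul0r addr0 mulN1r; lra.
rewrite ltr_cos ?in_itv /= ?x0 ?x1 //; last by apply/andP; split; lra.
lra.
Qed.

Lemma sin_pi_sub x : sin (pi - x) = sin x.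
Proof. by rewrite sinB sinpi cospi; ring. Qed.

Lemma sin_twice_add x H : sin (2 * x + H) - sin H = 2 * (cos (x + H) * sin x).
Proof.
have -> : sin H = sin ((x + H) - x) by congr sin; ring.
have -> : 2 * x + H = x + (x + H) by ring.
by rewrite sinD sinB; ring.
Qed.

Lemma defect_term_sin_cos x H : 2 * sin H * (cos (x + H) * sin x)
  = sin x * cos x * sin (pi - 2 * H) - sin x ^+ 2 * (1 + cos (pi - 2 * H)).
Proof.
rewrite sin_pi_sub cosB cospi sinpi (_ : 2 * H = H + H) ?cosD ?sinD; last by ring.
have := cos2Dsin2 H; nra.
Qed.

Lemma four_sin_prod x1 x2 x3 H : x1 + x2 + x3 + 2 * H = pi ->
  4 * (sin (x1 + H) * sin (x2 + H) * sin (x3 + H))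
  = sin (2 * x1 + H) + sin (2 * x2 + H) + sin (2 * x3 + H) + sin H.
Proof.
(* Product-to-sum twice; the constraint turns the four resulting sines into
   those of [pi - (2 * xi + H)] and of [pi + H]. *)
move=> hsum.
have cos_sin a b : 2 * cos a * sin b = sin (b + a) + sin (b - a).
  by rewrite sinD sinB; ring.
have -> : 4 * (sin (x1 + H) * sin (x2 + H) * sin (x3 + H))
    = 2 * cos ((x1 + H) - (x2 + H)) * sin (x3 + H)
      - 2 * cos ((x1 + H) + (x2 + H)) * sin (x3 + H).
  by rewrite cosB (cosD (x1 + H) (x2 + H)); ring.
rewrite !cos_sin.
rewrite (_ : x3 + H + _ = pi - (2 * x2 + H)); last by lra.
rewrite (_ : x3 + H - (x1 + H - (x2 + H)) = pi - (2 * x1 + H)); last by lra.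
rewrite (_ : x3 + H + _ = pi + H); last by lra.
rewrite (_ : x3 + H - _ = (2 * x3 + H) - pi); last by lra.
rewrite !sin_pi_sub sinD sinB sinpi cospi; ring.
Qed.

End Trigonometry.

Section GramDet.
Variable F : fieldType.
Implicit Types a b c : F.

Definition gram_det a b c : F := 1 + 2 * a * b * c - a ^+ 2 - b ^+ 2 - c ^+ 2.

Lemma gram_detC a b c : gram_det a b c = gram_det a c b.
Proof. by rewrite /gram_det; ring. Qed.

Lemma gram_det_rot a b c : gram_det a b c = gram_det b c a.
Proof. by rewrite /gram_det; ring. Qed.

Lemma gram3_solve a b c t l1 l2 l3 : gram_det a b c != 0 ->
  l1 + l2 * a + l3 * b = t -> l1 * a + l2 + l3 * c = t -> l1 * b + l2 * c + l3 = t ->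
  [/\ l1 = t / gram_det a b c * ((a + b - c - 1) * (c - 1)),
      l2 = t / gram_det a b c * ((a - b + c - 1) * (b - 1)) &
      l3 = t / gram_det a b c * ((- a + b + c - 1) * (a - 1))].
Proof.
move=> hD e1 e2 e3.
(* The multipliers are the rows of the adjugate of the Gram matrix [gmat3 a b c]. *)
have k1 : gram_det a b c * l1 = (1 - c ^+ 2) * (l1 + l2 * a + l3 * b)
    + (b * c - a) * (l1 * a + l2 + l3 * c) + (a * c - b) * (l1 * b + l2 * c + l3).
  by rewrite /gram_det; ring.
have k2 : gram_det a b c * l2 = (b * c - a) * (l1 + l2 * a + l3 * b)
    + (1 - b ^+ 2) * (l1 * a + l2 + l3 * c) + (a * b - c) * (l1 * b + l2 * c + l3).
  by rewrite /gram_det; ring.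
have k3 : gram_det a b c * l3 = (a * c - b) * (l1 + l2 * a + l3 * b)
    + (a * b - c) * (l1 * a + l2 + l3 * c) + (1 - a ^+ 2) * (l1 * b + l2 * c + l3).
  by rewrite /gram_det; ring.
rewrite e1 e2 e3 in k1 k2 k3.
by split; apply: (mulfI hD); rewrite ?k1 ?k2 ?k3; field.
Qed.

End GramDet.

Lemma det_gmat3 (R : realType) (a b c : R) : \det (gmat3 a b c) = gram_det a b c.
Proof.
rewrite (expand_det_row _ ord0) !big_ord_recl big_ord0 /cofactor.
rewrite !(expand_det_row _ ord0) !big_ord_recl !big_ord0 /cofactor !det_mx11.
by rewrite !mxE /= /bump /= /gram_det; ring.
Qed.

Section GammaAngles.
Variable R : realType.
Implicit Types a b c : R.

(* The angle between two sides with gamma factors [a] and [b], the opposite side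
   having gamma factor [c] (gyrotrigonometric law of cosines). *)
Definition gamma_angle a b c : R :=
  acos ((a * b - c) / (Num.sqrt (a ^+ 2 - 1) * Num.sqrt (b ^+ 2 - 1))).

Lemma gamma_angleC a b c : gamma_angle a b c = gamma_angle b a c.
Proof. by rewrite /gamma_angle (mulrC a) (mulrC (Num.sqrt _)). Qed.

Lemma sqrt_sqr_sub1 a : 1 < a ->
  0 < Num.sqrt (a ^+ 2 - 1) /\ Num.sqrt (a ^+ 2 - 1) ^+ 2 = a ^+ 2 - 1.
Proof.
move=> ha; have a2 : 0 < a ^+ 2 - 1 by nra.
by rewrite sqrtr_gt0 sqr_sqrtr // ltW.
Qed.

Section OneAngle.
Variables a b c : R.
Hypotheses (ha : 1 < a) (hb : 1 < b) (hD : 0 < gram_det a b c).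

Let p : R := Num.sqrt (a ^+ 2 - 1).
Let q : R := Num.sqrt (b ^+ 2 - 1).
Let x : R := (a * b - c) / (p * q).
Let y : R := Num.sqrt (gram_det a b c) / (p * q).

Let y_gt0 : 0 < y.
Proof.
have [p0 _] := sqrt_sqr_sub1 ha; have [q0 _] := sqrt_sqr_sub1 hb.
by rewrite divr_gt0 ?sqrtr_gt0 ?mulr_gt0.
Qed.

Let sqr_x : 1 - x ^+ 2 = y ^+ 2.
Proof.
have [p0 ep] := sqrt_sqr_sub1 ha; have [q0 eq] := sqrt_sqr_sub1 hb.
rewrite /x /y !expr_div_n sqr_sqrtr ?ltW // exprMn ep eq /gram_det.
by field; rewrite -ep -eq !sqrf_eq0 !gt_eqF.
Qed.

Let x_bounds : -1 < x < 1.
Proof. by move: sqr_x y_gt0 => e y0; apply/andP; split; nra. Qed.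

Lemma cos_gamma_angle : cos (gamma_angle a b c) = x.
Proof. by rewrite acosK // in_itv /=; case/andP: x_bounds => *; rewrite !ltW. Qed.

Lemma sin_gamma_angle : sin (gamma_angle a b c) = y.
Proof.
rewrite sin_acos; last by case/andP: x_bounds => *; rewrite !ltW.
by rewrite -/x sqr_x sqrtr_sqr gtr0_norm.
Qed.

Lemma gamma_angle_bounds : 0 < gamma_angle a b c < pi.
Proof.
case/andP: x_bounds => x1 x2.
by rewrite acos_gt0 ?acos_ltpi // ?x1 ?x2 ?ltW.
Qed.

End OneAngle.

Section GammaTriangle.
Variables a b c : R.
Hypotheses (ha : 1 < a) (hb : 1 < b) (hc : 1 < c) (hD : 0 < gram_det a b c).

Let al1 : R := gamma_angle a b c.
Let al2 : R := gamma_angle a c b.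
Let al3 : R := gamma_angle b c a.
Let p : R := Num.sqrt (a ^+ 2 - 1).
Let q : R := Num.sqrt (b ^+ 2 - 1).
Let r : R := Num.sqrt (c ^+ 2 - 1).
Let d : R := Num.sqrt (gram_det a b c).

Let p_gt0 : 0 < p. Proof. by case: (sqrt_sqr_sub1 ha). Qed.
Let q_gt0 : 0 < q. Proof. by case: (sqrt_sqr_sub1 hb). Qed.
Let r_gt0 : 0 < r. Proof. by case: (sqrt_sqr_sub1 hc). Qed.
Let p_sqr : p ^+ 2 = a ^+ 2 - 1. Proof. by case: (sqrt_sqr_sub1 ha). Qed.
Let q_sqr : q ^+ 2 = b ^+ 2 - 1. Proof. by case: (sqrt_sqr_sub1 hb). Qed.
Let r_sqr : r ^+ 2 = c ^+ 2 - 1. Proof. by case: (sqrt_sqr_sub1 hc). Qed.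
Let d_sqr : d ^+ 2 = gram_det a b c. Proof. by rewrite sqr_sqrtr ?ltW. Qed.

Let hD2 : 0 < gram_det a c b. Proof. by rewrite -gram_detC. Qed.
Let hD3 : 0 < gram_det b c a. Proof. by rewrite -gram_det_rot. Qed.

Let cos1 : cos al1 = (a * b - c) / (p * q). Proof. exact: cos_gamma_angle. Qed.
Let cos2 : cos al2 = (a * c - b) / (p * r). Proof. exact: cos_gamma_angle. Qed.
Let cos3 : cos al3 = (b * c - a) / (q * r). Proof. exact: cos_gamma_angle. Qed.
Let sin1 : sin al1 = d / (p * q). Proof. exact: sin_gamma_angle. Qed.
Let sin2 : sin al2 = d / (p * r).
Proof. by rewrite /al2 sin_gamma_angle // -gram_detC. Qed.
Let sin3 : sin al3 = d / (q * r).
Proof. by rewrite /al3 sin_gamma_angle // -gram_det_rot. Qed.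

(* [sin (al1 + al2) > 0] excludes [al1 + al2 >= pi]; then
   [cos (al1 + al2) + cos al3 > 0] excludes [al1 + al2 + al3 >= pi]. *)
Lemma gamma_angle_sum_lt_pi : al1 + al2 + al3 < pi.
Proof.
have /andP[al1_gt0 al1_lt] : 0 < al1 < pi := gamma_angle_bounds ha hb hD.
have /andP[al2_gt0 al2_lt] : 0 < al2 < pi := gamma_angle_bounds ha hc hD2.
have /andP[al3_gt0 al3_lt] : 0 < al3 < pi := gamma_angle_bounds hb hc hD3.
have d_gt0 : 0 < d by rewrite sqrtr_gt0.
have a1 : 0 < a - 1 by rewrite subr_gt0.
have al12_lt : al1 + al2 < pi.
  apply: sin_gt0_lt_pi; first by apply/andP; split; lra.
  rewrite sinD sin1 sin2 cos1 cos2.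
  have -> : d / (p * q) * ((a * c - b) / (p * r)) + (a * b - c) / (p * q) * (d / (p * r))
      = d * ((a - 1) * (b + c)) / (p ^+ 2 * q * r).
    by field; rewrite !gt_eqF.
  have bc : 0 < b + c by rewrite addr_gt0 // (lt_trans ltr01).
  by rewrite divr_gt0 ?mulr_gt0 ?exprn_gt0.
apply: cos_add_gt0_lt_pi; [apply/andP; split; lra | apply/andP; split; lra |].
rewrite cosD sin1 sin2 cos1 cos2 cos3.
have -> : (a * b - c) / (p * q) * ((a * c - b) / (p * r)) - d / (p * q) * (d / (p * r))
    + (b * c - a) / (q * r)
    = ((a * b - c) * (a * c - b) - d ^+ 2 + (b * c - a) * p ^+ 2) / (p ^+ 2 * q * r).
  by field; rewrite !gt_eqF.
rewrite d_sqr {1}p_sqr (_ : _ - _ + _ = (a - 1) * gram_det a b c); last first.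
  by rewrite /gram_det; ring.
by rewrite divr_gt0 ?mulr_gt0 ?exprn_gt0.
Qed.

Lemma sin_gamma_angle_sum : sin (al1 + al2 + al3) =
  d * (((a * b - c) * (a * c - b) + (a * b - c) * (b * c - a) + (a * c - b) * (b * c - a)
        - gram_det a b c) / ((a ^+ 2 - 1) * (b ^+ 2 - 1) * (c ^+ 2 - 1))).
Proof.
rewrite !sinD !cosD sin1 sin2 sin3 cos1 cos2 cos3 -d_sqr -p_sqr -q_sqr -r_sqr.
by field; rewrite !gt_eqF.
Qed.

Lemma cos_gamma_angle_sum : cos (al1 + al2 + al3) =
  ((a * b - c) * (a * c - b) * (b * c - a)
   - gram_det a b c * ((a * b - c) + (a * c - b) + (b * c - a)))
  / ((a ^+ 2 - 1) * (b ^+ 2 - 1) * (c ^+ 2 - 1)).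
Proof.
rewrite !cosD !sinD sin1 sin2 sin3 cos1 cos2 cos3 -d_sqr -p_sqr -q_sqr -r_sqr.
by field; rewrite !gt_eqF.
Qed.

Lemma gamma_defect_term H : al1 + al2 + al3 + 2 * H = pi ->
  2 * sin H * (cos (al1 + H) * sin al1)
  = gram_det a b c / ((a ^+ 2 - 1) * (b ^+ 2 - 1) * (c ^+ 2 - 1))
    * ((a + b - c - 1) * (c - 1)).
Proof.
move=> sumH; rewrite defect_term_sin_cos (_ : pi - 2 * H = al1 + al2 + al3); last by lra.
rewrite sin_gamma_angle_sum cos_gamma_angle_sum sin1 cos1.
have sqr_mul u v : d / (p * q) * (u / (p * q)) * (d * v)
    = d ^+ 2 * u * v / (p ^+ 2 * q ^+ 2).
  by field; rewrite !gt_eqF.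
rewrite sqr_mul expr_div_n exprMn d_sqr p_sqr q_sqr /gram_det.
by field; rewrite -p_sqr -q_sqr -r_sqr !sqrf_eq0 !gt_eqF.
Qed.

End GammaTriangle.

Lemma gamma_angle_coords a b c : 1 < a -> 1 < b -> 1 < c -> 0 < gram_det a b c ->
  let al1 := gamma_angle a b c in
  let al2 := gamma_angle a c b in
  let al3 := gamma_angle b c a in
  let H := (pi - al1 - al2 - al3) / 2 in
  exists2 k : R, 0 < k &
    [/\ (a + b - c - 1) * (c - 1) = k * (cos (al1 + H) * sin al1),
        (a - b + c - 1) * (b - 1) = k * (cos (al2 + H) * sin al2) &
        (- a + b + c - 1) * (a - 1) = k * (cos (al3 + H) * sin al3)].
Proof.
move=> ha hb hc hD al1 al2 al3 H.
have hD2 : 0 < gram_det a c b by rewrite -gram_detC.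
have hD3 : 0 < gram_det b c a by rewrite -gram_det_rot.
have /andP[al1_gt0 _] : 0 < al1 < pi := gamma_angle_bounds ha hb hD.
have /andP[al2_gt0 _] : 0 < al2 < pi := gamma_angle_bounds ha hc hD2.
have /andP[al3_gt0 _] : 0 < al3 < pi := gamma_angle_bounds hb hc hD3.
have sum_lt : al1 + al2 + al3 < pi := gamma_angle_sum_lt_pi ha hb hc hD.
have sinH_gt0 : 0 < sin H by apply: sin_gt0_pihalf; apply/andP; split; rewrite /H; lra.
set k0 := gram_det a b c / ((a ^+ 2 - 1) * (b ^+ 2 - 1) * (c ^+ 2 - 1)).
have k0_gt0 : 0 < k0.
  by rewrite divr_gt0 // !mulr_gt0 // subr_gt0 -[1](expr1n _ 2) ltrXn2r // ltW.
have sumH : gamma_angle a b c + gamma_angle a c b + gamma_angle b c a + 2 * H = pi.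
  by rewrite /H /al1 /al2 /al3; lra.
have t1 : 2 * sin H * (cos (al1 + H) * sin al1) = k0 * ((a + b - c - 1) * (c - 1)).
  exact: gamma_defect_term.
(* The permutations (a, c, b) and (b, c, a) permute the three angles. *)
have t2 : 2 * sin H * (cos (al2 + H) * sin al2) = k0 * ((a - b + c - 1) * (b - 1)).
  rewrite (gamma_defect_term ha hc hb hD2); last by rewrite (gamma_angleC c); lra.
  by congr (_ * _); [rewrite /k0 -gram_detC; congr (_ / _) | idtac]; ring.
have t3 : 2 * sin H * (cos (al3 + H) * sin al3) = k0 * ((- a + b + c - 1) * (a - 1)).
  rewrite (gamma_defect_term hb hc ha hD3); last first.
    by rewrite (gamma_angleC b a c) (gamma_angleC c a b); lra.
  by congr (_ * _); [rewrite /k0 -gram_det_rot; congr (_ / _) | idtac]; ring.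
have solve m t : 2 * sin H * t = k0 * m -> m = 2 * sin H / k0 * t.
  by move=> e; apply: (mulfI (lt0r_neq0 k0_gt0)); rewrite -e; field; rewrite gt_eqF.
exists (2 * sin H / k0); first by rewrite divr_gt0 // mulr_gt0.
by split; apply: solve.
Qed.

Lemma defect_sum_gt0 (al1 al2 al3 H k m1 m2 m3 : R) : 0 < k ->
  m1 = k * (cos (al1 + H) * sin al1) -> m2 = k * (cos (al2 + H) * sin al2) ->
  m3 = k * (cos (al3 + H) * sin al3) ->
  0 < m1 + m2 + m3 <->
  3 * sin H < sin (2 * al1 + H) + sin (2 * al2 + H) + sin (2 * al3 + H).
Proof.
move=> k_gt0 -> -> ->.
have := sin_twice_add al1 H; have := sin_twice_add al2 H; have := sin_twice_add al3 H.
move=> e3 e2 e1; rewrite -!mulrDr pmulr_rgt0 //; split=> h; lra.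
Qed.

Lemma defect_prod_iff (al1 al2 al3 H : R) : al1 + al2 + al3 + 2 * H = pi ->
  3 * sin H < sin (2 * al1 + H) + sin (2 * al2 + H) + sin (2 * al3 + H) <->
  sin H < sin (al1 + H) * sin (al2 + H) * sin (al3 + H).
Proof. by move=> /four_sin_prod e; split=> h; lra. Qed.

End GammaAngles.

Section DotProduct.
Variables (R : realType) (n : nat).
Implicit Types (u v w : 'rV[R]_n) (k : R).

Lemma dotvC u v : dotv u v = dotv v u.
Proof. by apply: eq_bigr => i _; rewrite mulrC. Qed.

Lemma dotvDl u v w : dotv (u + v) w = dotv u w + dotv v w.
Proof. by rewrite /dotv -big_split; apply: eq_bigr => i _; rewrite !mxE mulrDl. Qed.

Lemma dotvZl k u v : dotv (k *: u) v = k * dotv u v.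
Proof. by rewrite /dotv mulr_sumr; apply: eq_bigr => i _; rewrite !mxE mulrA. Qed.

Lemma dotvNl u v : dotv (- u) v = - dotv u v.
Proof. by rewrite -scaleN1r dotvZl mulN1r. Qed.

Lemma dotvDr u v w : dotv w (u + v) = dotv w u + dotv w v.
Proof. by rewrite dotvC dotvDl !(dotvC w). Qed.

Lemma dotvZr k u v : dotv v (k *: u) = k * dotv v u.
Proof. by rewrite dotvC dotvZl dotvC. Qed.

Lemma dotvNr u v : dotv v (- u) = - dotv v u.
Proof. by rewrite dotvC dotvNl dotvC. Qed.

Lemma dotvNN v : dotv (- v) (- v) = dotv v v.
Proof. by rewrite dotvNl dotvNr opprK. Qed.

Lemma dotv_ge0 u : 0 <= dotv u u.
Proof. by apply: sumr_ge0 => i _; rewrite -expr2 sqr_ge0. Qed.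

Lemma dotv_gt0 u : u != 0 -> 0 < dotv u u.
Proof.
move=> u0; rewrite lt_def dotv_ge0 andbT; apply: contra u0.
rewrite /dotv psumr_eq0 => [/allP u0|i _]; last by rewrite -expr2 sqr_ge0.
apply/eqP/rowP => i; rewrite mxE; apply/eqP.
by move: (u0 i (mem_index_enum _)); rewrite -expr2 sqrf_eq0.
Qed.

Lemma dotv_amgm u v : 2 * dotv u v <= dotv u u + dotv v v.
Proof.
have := dotv_ge0 (u - v).
by rewrite dotvDl !dotvDr !dotvNl !dotvNr (dotvC v u) => h; lra.
Qed.

Lemma lin_indep2_neq0 u v : lin_indep2 u v -> u != 0 /\ v != 0.
Proof.
move=> uv; split; apply/eqP => e.
  move: (uv 1 0); rewrite e scaler0 scale0r addr0 => /(_ erefl) [/eqP].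
  by rewrite oner_eq0.
move: (uv 0 1); rewrite e scaler0 scale0r addr0 => /(_ erefl) [_ /eqP].
by rewrite oner_eq0.
Qed.

Lemma cauchy_schwarz_lt u v : lin_indep2 u v -> dotv u v ^+ 2 < dotv u u * dotv v v.
Proof.
move=> uv; have [_ v0] := lin_indep2_neq0 uv.
have vv_gt0 := dotv_gt0 v0.
set z := dotv v v *: u + (- dotv u v) *: v.
have z0 : z != 0.
  by apply: contraTneq vv_gt0 => /uv [-> _]; rewrite ltxx.
have := dotv_gt0 z0.
have -> : dotv z z = dotv v v * (dotv u u * dotv v v - dotv u v ^+ 2).
  by rewrite /z !(dotvDl, dotvDr, dotvZl, dotvZr) (dotvC v u); ring.
by rewrite pmulr_rgt0 // subr_gt0.
Qed.

End DotProduct.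

Section LorentzFactor.
Variables (R : realType) (n : nat) (s : R).
Hypothesis s_gt0 : 0 < s.
Implicit Types (u v A B C : 'rV[R]_n).

Let s2_gt0 : 0 < s ^+ 2. Proof. exact: exprn_gt0. Qed.

Let s2D_gt0 x : 0 < 1 + x / s ^+ 2 -> 0 < s ^+ 2 + x.
Proof.
move=> h; have -> : s ^+ 2 + x = s ^+ 2 * (1 + x / s ^+ 2) by field; rewrite gt_eqF.
exact: mulr_gt0.
Qed.

Let s2B_gt0 x : 0 < 1 - x / s ^+ 2 -> 0 < s ^+ 2 - x.
Proof.
move=> h; have -> : s ^+ 2 - x = s ^+ 2 * (1 - x / s ^+ 2) by field; rewrite gt_eqF.
exact: mulr_gt0.
Qed.

Lemma in_ballP v : in_ball s v <-> dotv v v < s ^+ 2.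
Proof.
rewrite /in_ball /normv -[X in _ < X](@ger0_norm _ s) ?ltW // -sqrtr_sqr.
by rewrite ltr_sqrt.
Qed.

Let one_sub_gt0 v : in_ball s v -> 0 < 1 - dotv v v / s ^+ 2.
Proof. by move=> /in_ballP h; rewrite subr_gt0 ltr_pdivrMr // mul1r. Qed.

Lemma gam_gt0 v : in_ball s v -> 0 < gam s v.
Proof. by move=> h; rewrite /gam invr_gt0 sqrtr_gt0 one_sub_gt0. Qed.

Lemma gamV_sqr v : in_ball s v -> (gam s v ^+ 2)^-1 = 1 - dotv v v / s ^+ 2.
Proof. by move=> h; rewrite /gam exprVn invrK sqr_sqrtr ?ltW ?one_sub_gt0. Qed.

Lemma dotv_gam v : in_ball s v -> dotv v v = s ^+ 2 * (1 - (gam s v ^+ 2)^-1).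
Proof. by move=> h; rewrite gamV_sqr //; field; rewrite gt_eqF. Qed.

Lemma gam_ge1 v : in_ball s v -> 1 <= gam s v.
Proof.
move=> h; have g0 := gam_gt0 h; have := dotv_ge0 v; rewrite dotv_gam //.
rewrite pmulr_rge0 // subr_ge0 invf_le1 ?exprn_gt0 // => g1.
by nra.
Qed.

Lemma gam_gt1 v : in_ball s v -> v != 0 -> 1 < gam s v.
Proof.
move=> h v0; have g0 := gam_gt0 h; have := dotv_gt0 v0; rewrite dotv_gam //.
rewrite pmulr_rgt0 // subr_gt0 invf_lt1 ?exprn_gt0 // => g1.
by nra.
Qed.

Lemma gam_eq v y : 0 < y -> 1 - dotv v v / s ^+ 2 = (y ^+ 2)^-1 -> gam s v = y.
Proof.
move=> y0 e; rewrite /gam e sqrtrV ?invr_ge0 ?exprn_ge0 ?ltW //.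
by rewrite sqrtr_sqr invrK gtr0_norm.
Qed.

Lemma gam_eq_normv u v : normv u = normv v -> gam s u = gam s v.
Proof.
move=> e; rewrite /gam.
have : normv u ^+ 2 = normv v ^+ 2 by rewrite e.
by rewrite /normv !sqr_sqrtr ?dotv_ge0 // => ->.
Qed.

Lemma gamN v : gam s (- v) = gam s v.
Proof. by rewrite /gam dotvNN. Qed.

Lemma one_pm_dotv_gt0 u v : in_ball s u -> in_ball s v ->
  0 < 1 + dotv u v / s ^+ 2 /\ 0 < 1 - dotv u v / s ^+ 2.
Proof.
move=> /in_ballP hu /in_ballP hv; have h1 := dotv_amgm u v.
have := dotv_amgm u (- v); rewrite dotvNr dotvNN => h2.
have e1 : dotv u v / s ^+ 2 < 1 by rewrite ltr_pdivrMr // mul1r; lra.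
have e2 : - (dotv u v / s ^+ 2) < 1 by rewrite -mulNr ltr_pdivrMr // mul1r; lra.
by split; lra.
Qed.

Let eadd_dot u v : in_ball s u -> in_ball s v ->
  1 - dotv (eadd s u v) (eadd s u v) / s ^+ 2
  = ((gam s u * gam s v * (1 + dotv u v / s ^+ 2)) ^+ 2)^-1.
Proof.
move=> hu hv; have [uv0 _] := one_pm_dotv_gt0 hu hv.
have gu := gam_gt0 hu; have gv := gam_gt0 hv.
rewrite /eadd !(dotvZl, dotvZr, dotvDl, dotvDr) (dotvC v u) (dotv_gam hu) (dotv_gam hv).
field; rewrite ?(gt_eqF s_gt0) ?(gt_eqF gu) ?(gt_eqF gv) ?(gt_eqF uv0) ?andbT //=.
by rewrite !gt_eqF ?s2D_gt0 // addr_gt0.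
Qed.

Lemma gam_eadd u v : in_ball s u -> in_ball s v ->
  gam s (eadd s u v) = gam s u * gam s v * (1 + dotv u v / s ^+ 2).
Proof.
move=> hu hv; have [uv0 _] := one_pm_dotv_gt0 hu hv.
by apply: gam_eq; [rewrite !mulr_gt0 ?gam_gt0 | exact: eadd_dot].
Qed.

Lemma eadd_ball u v : in_ball s u -> in_ball s v -> in_ball s (eadd s u v).
Proof.
move=> hu hv; apply/in_ballP; have [uv0 _] := one_pm_dotv_gt0 hu hv.
have : 0 < ((gam s u * gam s v * (1 + dotv u v / s ^+ 2)) ^+ 2)^-1.
  by rewrite invr_gt0 exprn_gt0 // !mulr_gt0 ?gam_gt0.
by rewrite -eadd_dot // subr_gt0 ltr_pdivrMr // mul1r.
Qed.

Lemma gam_eadd_scale u v : in_ball s u -> in_ball s v ->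
  gam s (eadd s u v) *: eadd s u v =
  (gam s u * gam s v) *: (u + (gam s u)^-1 *: v
       + (s ^+ 2)^-1 * (gam s u / (1 + gam s u)) * dotv u v *: u).
Proof.
move=> hu hv; have [uv0 _] := one_pm_dotv_gt0 hu hv.
rewrite gam_eadd // /eadd scalerA; congr (_ *: _); field.
by rewrite (gt_eqF s_gt0) gt_eqF // s2D_gt0.
Qed.

Lemma gvec_ball A B : in_ball s A -> in_ball s B -> in_ball s (gvec s A B).
Proof.
by move=> hA hB; apply: eadd_ball => //; apply/in_ballP; rewrite dotvNN; apply/in_ballP.
Qed.

Lemma gam_gvec A B : in_ball s A -> in_ball s B ->
  gam s (gvec s A B) = gam s A * gam s B * (1 - dotv A B / s ^+ 2).
Proof.
move=> hA hB; have hNA : in_ball s (- A) by apply/in_ballP; rewrite dotvNN; apply/in_ballP.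
by rewrite /gvec gam_eadd // gamN dotvNl mulNr.
Qed.

Lemma gam_gvecC A B : in_ball s A -> in_ball s B ->
  gam s (gvec s A B) = gam s (gvec s B A).
Proof. by move=> hA hB; rewrite !gam_gvec // dotvC (mulrC (gam s A)). Qed.

Lemma gam_gvec_self A : in_ball s A -> gam s (gvec s A A) = 1.
Proof.
move=> hA; rewrite gam_gvec // -expr2 -gamV_sqr // mulfV //.
by rewrite expf_neq0 // gt_eqF ?gam_gt0.
Qed.

Lemma gvec_scale A B : in_ball s A -> in_ball s B ->
  gam s (gvec s A B) *: gvec s A B =
  gam s B *: B - (gam s A * gam s B *
     (1 - (s ^+ 2)^-1 * (gam s A / (1 + gam s A)) * dotv A B)) *: A.
Proof.
move=> hA hB; have hNA : in_ball s (- A) by apply/in_ballP; rewrite dotvNN; apply/in_ballP.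
have gA := gam_gt0 hA.
rewrite /gvec gam_eadd_scale // gamN dotvNl.
apply/rowP => i; rewrite !mxE; field.
by rewrite (gt_eqF s_gt0) (gt_eqF gA) gt_eqF // addr_gt0.
Qed.

Lemma gvec_dot A B C : in_ball s A -> in_ball s B -> in_ball s C ->
  dotv (gvec s A B) (gvec s A C) = s ^+ 2 * (1 - gam s (gvec s B C) /
     (gam s (gvec s A B) * gam s (gvec s A C))).
Proof.
move=> hA hB hC; rewrite !gam_gvec //.
have [_ h1] := one_pm_dotv_gt0 hA hB; have [_ h2] := one_pm_dotv_gt0 hA hC.
have gA := gam_gt0 hA; have gB := gam_gt0 hB; have gC := gam_gt0 hC.
rewrite /gvec /eadd !(dotvZl, dotvZr, dotvDl, dotvDr) gamN !dotvNl !dotvNr !opprK.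
rewrite ?(dotvC B A) ?(dotvC C A) ?(dotvC C B) (dotv_gam hA).
field; rewrite ?(gt_eqF s_gt0) ?(gt_eqF gA) ?(gt_eqF gB) ?(gt_eqF gC) ?andbT //=.
by rewrite !gt_eqF ?s2B_gt0 // addr_gt0.
Qed.

Lemma normv_gvec A B : in_ball s A -> in_ball s B ->
  normv (gvec s A B) = s * Num.sqrt (gam s (gvec s A B) ^+ 2 - 1) / gam s (gvec s A B).
Proof.
move=> hA hB; have hAB := gvec_ball hA hB; have g0 := gam_gt0 hAB.
rewrite /normv dotv_gam //.
set g := gam s (gvec s A B).
have -> : s ^+ 2 * (1 - (g ^+ 2)^-1) = (s / g) ^+ 2 * (g ^+ 2 - 1).
  by field; rewrite gt_eqF.
rewrite sqrtrM ?exprn_ge0 ?divr_ge0 ?ltW // sqrtr_sqr ger0_norm ?divr_ge0 ?ltW //.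
by rewrite mulrAC.
Qed.

End LorentzFactor.

Definition gbary (R : realType) (n : nat) (s m1 m2 m3 : R) (A1 A2 A3 : 'rV[R]_n) :=
  (m1 * gam s A1 + m2 * gam s A2 + m3 * gam s A3)^-1 *:
    (m1 * gam s A1 *: A1 + m2 * gam s A2 *: A2 + m3 * gam s A3 *: A3).

Section Gyrobarycentric.
Variables (R : realType) (n : nat) (s : R).
Hypothesis s_gt0 : 0 < s.
Implicit Types v : 'rV[R]_n.

Lemma gbaryZ (t m1 m2 m3 : R) (A1 A2 A3 : 'rV[R]_n) : t != 0 ->
  gbary s (t * m1) (t * m2) (t * m3) A1 A2 A3 = gbary s m1 m2 m3 A1 A2 A3.
Proof.
move=> t0; rewrite /gbary -!(mulrA t) -!(scalerA t) -!mulrDr -!scalerDr scalerA.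
by rewrite invfM mulrAC mulVf ?mul1r.
Qed.

Lemma gbary_rep (l1 l2 l3 : R) (P A1 A2 A3 : 'rV[R]_n) : gam s P != 0 ->
  gam s P = l1 * gam s A1 + l2 * gam s A2 + l3 * gam s A3 ->
  gam s P *: P = l1 * gam s A1 *: A1 + l2 * gam s A2 *: A2 + l3 * gam s A3 *: A3 ->
  P = gbary s l1 l2 l3 A1 A2 A3.
Proof. by move=> gP0 eg ev; rewrite /gbary -eg -ev scalerA mulVf ?scale1r. Qed.

Lemma in_ball_scaleV (d : R) v :
  (d != 0 /\ in_ball s (d^-1 *: v)) <-> 0 < d ^+ 2 - dotv v v / s ^+ 2.
Proof.
have s2_gt0 : 0 < s ^+ 2 by rewrite exprn_gt0.
rewrite in_ballP // dotvZl dotvZr mulrA -expr2 exprVn.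
have vv := dotv_ge0 v; split.
  move=> [d0 h]; have d2 : 0 < d ^+ 2 by rewrite exprn_even_gt0 //= d0.
  by move: h; rewrite mulrC !ltr_pdivrMr // subr_gt0 ltr_pdivrMr // mulrC.
move=> h; have d0 : d != 0.
  apply: contraTneq h => ->; rewrite expr0n /= sub0r oppr_gt0 -leNgt.
  by rewrite divr_ge0 // ltW.
have d2 : 0 < d ^+ 2 by rewrite exprn_even_gt0 //= d0.
move: h; rewrite subr_gt0 ltr_pdivrMr // => h.
by split=> //; rewrite mulrC ltr_pdivrMr // mulrC.
Qed.

Section Triple.
Variables A1 A2 A3 : 'rV[R]_n.
Hypotheses (h1 : in_ball s A1) (h2 : in_ball s A2) (h3 : in_ball s A3).

Lemma gbary_lorentz (m1 m2 m3 : R) :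
  (m1 * gam s A1 + m2 * gam s A2 + m3 * gam s A3) ^+ 2 -
  dotv (m1 * gam s A1 *: A1 + m2 * gam s A2 *: A2 + m3 * gam s A3 *: A3)
       (m1 * gam s A1 *: A1 + m2 * gam s A2 *: A2 + m3 * gam s A3 *: A3) / s ^+ 2
  = m1 ^+ 2 + m2 ^+ 2 + m3 ^+ 2 + 2 * (m1 * m2 * gam s (gvec s A1 A2)
      + m1 * m3 * gam s (gvec s A1 A3) + m2 * m3 * gam s (gvec s A2 A3)).
Proof.
have g1 := gam_gt0 s_gt0 h1; have g2 := gam_gt0 s_gt0 h2; have g3 := gam_gt0 s_gt0 h3.
rewrite !gam_gvec // !(dotvDl, dotvDr, dotvZl, dotvZr).
rewrite (dotvC A2 A1) (dotvC A3 A1) (dotvC A3 A2).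
rewrite (dotv_gam s_gt0 h1) (dotv_gam s_gt0 h2) (dotv_gam s_gt0 h3).
by field; rewrite !gt_eqF.
Qed.

Lemma in_ball_gbary (m1 m2 m3 : R) :
  (m1 * gam s A1 + m2 * gam s A2 + m3 * gam s A3 != 0 /\
   in_ball s (gbary s m1 m2 m3 A1 A2 A3)) <->
  0 < m1 ^+ 2 + m2 ^+ 2 + m3 ^+ 2 + 2 * (m1 * m2 * gam s (gvec s A1 A2)
      + m1 * m3 * gam s (gvec s A1 A3) + m2 * m3 * gam s (gvec s A2 A3)).
Proof. by rewrite -gbary_lorentz -in_ball_scaleV. Qed.

(* By [gvec_scale], gam ((-)A1(+)Ai) *: ((-)A1(+)Ai) is a combination of A1 and Ai. *)
Lemma eadd_span_bary (a b : R) (w := a *: gvec s A1 A2 + b *: gvec s A1 A3) :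
  in_ball s w -> exists l1 l2 l3 : R,
  gam s (eadd s A1 w) = l1 * gam s A1 + l2 * gam s A2 + l3 * gam s A3 /\
  gam s (eadd s A1 w) *: eadd s A1 w =
     l1 * gam s A1 *: A1 + l2 * gam s A2 *: A2 + l3 * gam s A3 *: A3.
Proof.
move=> hw.
have g1 := gam_gt0 s_gt0 h1; have gw := gam_gt0 s_gt0 hw.
have g12 := gam_gt0 s_gt0 (gvec_ball s_gt0 h1 h2).
have g13 := gam_gt0 s_gt0 (gvec_ball s_gt0 h1 h3).
have e2 := gvec_scale s_gt0 h1 h2; have e3 := gvec_scale s_gt0 h1 h3.
set G12 := gam s (gvec s A1 A2) in g12 e2.
set G13 := gam s (gvec s A1 A3) in g13 e3.
set b2 := gam s A1 * gam s A2 * _ in e2.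
set b3 := gam s A1 * gam s A3 * _ in e3.
have ew : w = (a / G12) *: (gam s A2 *: A2 - b2 *: A1)
            + (b / G13) *: (gam s A3 *: A3 - b3 *: A1).
  by rewrite /w -e2 -e3 !scalerA !mulrA !divfK ?gt_eqF.
rewrite (gam_eadd_scale s_gt0 h1 hw) (gam_eadd s_gt0 h1 hw).
set gW := gam s w in gw *.
have edot : dotv A1 w = (a / G12) * (gam s A2 * dotv A1 A2 - b2 * dotv A1 A1)
           + (b / G13) * (gam s A3 * dotv A1 A3 - b3 * dotv A1 A1).
  by rewrite ew !(dotvDr, dotvZr, dotvNr).
exists ((gam s A1 * gW * (1 + dotv A1 w / s ^+ 2) - gW * a / G12 * gam s A2
          - gW * b / G13 * gam s A3) / gam s A1), (gW * a / G12), (gW * b / G13).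
split; first by field; rewrite !gt_eqF.
rewrite edot ew (dotv_gam s_gt0 h1) /b2 /b3.
apply/rowP => i; rewrite !mxE.
by field; rewrite !gt_eqF // ?addr_gt0 ?exprn_gt0.
Qed.

Lemma gam_gvec_bary (l1 l2 l3 : R) (P X : 'rV[R]_n) : in_ball s P -> in_ball s X ->
  gam s P = l1 * gam s A1 + l2 * gam s A2 + l3 * gam s A3 ->
  gam s P *: P = l1 * gam s A1 *: A1 + l2 * gam s A2 *: A2 + l3 * gam s A3 *: A3 ->
  gam s (gvec s P X) = l1 * gam s (gvec s A1 X) + l2 * gam s (gvec s A2 X)
                       + l3 * gam s (gvec s A3 X).
Proof.
move=> hP hX eg ev; rewrite !gam_gvec //.
(* gam ((-)P(+)X) is linear in the pair (gam P, gam P *: P). *)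
have -> : gam s P * gam s X * (1 - dotv P X / s ^+ 2) =
          gam s X * (gam s P - dotv (gam s P *: P) X / s ^+ 2).
  by rewrite dotvZl; ring.
by rewrite ev eg !(dotvDl, dotvZl); ring.
Qed.

End Triple.
End Gyrobarycentric.

Lemma gangle_gamma (R : realType) (n : nat) (s : R) (A B C : 'rV[R]_n) : 0 < s ->
  in_ball s A -> in_ball s B -> in_ball s C ->
  1 < gam s (gvec s A B) -> 1 < gam s (gvec s A C) ->
  gangle s A B C =
  gamma_angle (gam s (gvec s A B)) (gam s (gvec s A C)) (gam s (gvec s B C)).
Proof.
move=> s_gt0 hA hB hC gAB gAC.
have [pAB _] := sqrt_sqr_sub1 gAB; have [pAC _] := sqrt_sqr_sub1 gAC.
rewrite /gangle /gamma_angle gvec_dot // !normv_gvec //.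
by congr acos; field; rewrite !gt_eqF // (lt_trans ltr01).
Qed.

Section Gyrotriangle.
Variables (R : realType) (n : nat) (s : R) (A1 A2 A3 : 'rV[R]_n).
Hypotheses (s_gt0 : 0 < s)
  (h1 : in_ball s A1) (h2 : in_ball s A2) (h3 : in_ball s A3)
  (indep : gyro_independent s A1 A2 A3).

Let g12 := gam s (gvec s A1 A2).
Let g13 := gam s (gvec s A1 A3).
Let g23 := gam s (gvec s A2 A3).

Lemma gram_det_gyro_gt0 : 0 < gram_det g12 g13 g23.
Proof.
have h12 := gvec_ball s_gt0 h1 h2; have h13 := gvec_ball s_gt0 h1 h3.
have g12_gt0 : 0 < g12 := gam_gt0 s_gt0 h12.
have g13_gt0 : 0 < g13 := gam_gt0 s_gt0 h13.
have := cauchy_schwarz_lt indep.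
rewrite (gvec_dot s_gt0 h1 h2 h3) (dotv_gam s_gt0 h12) (dotv_gam s_gt0 h13).
rewrite -/g12 -/g13 -/g23.
have -> : gram_det g12 g13 g23 =
    (s ^+ 2 * (1 - (g12 ^+ 2)^-1) * (s ^+ 2 * (1 - (g13 ^+ 2)^-1))
     - (s ^+ 2 * (1 - g23 / (g12 * g13))) ^+ 2) * (g12 ^+ 2 * g13 ^+ 2) / s ^+ 4.
  by rewrite /gram_det; field; rewrite !gt_eqF.
by rewrite -subr_gt0 => h; rewrite divr_gt0 ?mulr_gt0 ?exprn_gt0.
Qed.

Lemma gammas_gyro_gt1 : [/\ 1 < g12, 1 < g13 & 1 < g23].
Proof.
have [w2 w3] := lin_indep2_neq0 indep.
split; [exact: gam_gt1 (gvec_ball s_gt0 h1 h2) w2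
       | exact: gam_gt1 (gvec_ball s_gt0 h1 h3) w3 |].
rewrite lt_neqAle (gam_ge1 s_gt0 (gvec_ball s_gt0 h2 h3)) andbT.
apply: contraTneq gram_det_gyro_gt0 => <-.
rewrite -leNgt /gram_det (_ : _ - _ = - (g12 - g13) ^+ 2); last by ring.
by rewrite oppr_le0 sqr_ge0.
Qed.

Lemma gangles_gyro :
  [/\ gangle s A1 A2 A3 = gamma_angle g12 g13 g23,
      gangle s A2 A1 A3 = gamma_angle g12 g23 g13 &
      gangle s A3 A1 A2 = gamma_angle g13 g23 g12].
Proof.
have [g12_gt1 g13_gt1 g23_gt1] := gammas_gyro_gt1.
have g21 : gam s (gvec s A2 A1) = g12 := gam_gvecC s_gt0 h2 h1.
have g31 : gam s (gvec s A3 A1) = g13 := gam_gvecC s_gt0 h3 h1.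
have g32 : gam s (gvec s A3 A2) = g23 := gam_gvecC s_gt0 h3 h2.
split; first exact: gangle_gamma.
  by rewrite gangle_gamma ?g21 // g21.
by rewrite gangle_gamma ?g31 ?g32 // g31.
Qed.

Let m1 := (g12 + g13 - g23 - 1) * (g23 - 1).
Let m2 := (g12 - g13 + g23 - 1) * (g13 - 1).
Let m3 := (- g12 + g13 + g23 - 1) * (g12 - 1).

Lemma circumgyrocenter_gbary P :
  is_circumgyrocenter s A1 A2 A3 P -> P = gbary s m1 m2 m3 A1 A2 A3.
Proof.
move=> [[a [b [hw eP]]] [hP [d12 d23]]].
have [l1 [l2 [l3 [eg ev]]]] := eadd_span_bary s_gt0 h1 h2 h3 hw.
rewrite -eP in eg ev.
have rep X := gam_gvec_bary s_gt0 h1 h2 h3 hP X eg ev.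
have hP1 := rep _ h1; have hP2 := rep _ h2; have hP3 := rep _ h3.
rewrite (gam_gvec_self s_gt0 h1) (gam_gvecC s_gt0 h2 h1) (gam_gvecC s_gt0 h3 h1) in hP1.
rewrite (gam_gvec_self s_gt0 h2) (gam_gvecC s_gt0 h3 h2) in hP2.
rewrite (gam_gvec_self s_gt0 h3) in hP3.
rewrite -(gam_eq_normv s d12) in hP2.
rewrite -(gam_eq_normv s d23) -(gam_eq_normv s d12) in hP3.
rewrite -/g12 -/g13 -/g23 in hP1 hP2 hP3.
set t := gam s (gvec s P A1) in hP1 hP2 hP3.
have hD := lt0r_neq0 gram_det_gyro_gt0.
have e1 : l1 + l2 * g12 + l3 * g13 = t by rewrite hP1; ring.
have e2 : l1 * g12 + l2 + l3 * g23 = t by rewrite hP2; ring.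
have e3 : l1 * g13 + l2 * g23 + l3 = t by rewrite hP3; ring.
have [el1 el2 el3] := gram3_solve hD e1 e2 e3.
rewrite el1 el2 el3 in eg ev.
have t_gt0 : 0 < t := gam_gt0 s_gt0 (gvec_ball s_gt0 hP h1).
have tD0 : t / gram_det g12 g13 g23 != 0.
  by apply: mulf_neq0; [exact: lt0r_neq0 | rewrite invr_eq0].
by rewrite (gbary_rep (lt0r_neq0 (gam_gt0 s_gt0 hP)) eg ev) gbaryZ.
Qed.

End Gyrotriangle.

Theorem mainTheorem7 (R : realType) (n : nat) (s : R) (A1 A2 A3 : 'rV[R]_n) :
  (2 <= n)%N -> 0 < s ->
  in_ball s A1 -> in_ball s A2 -> in_ball s A3 ->
  gyro_independent s A1 A2 A3 ->
  let al1 := gangle s A1 A2 A3 in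
  let al2 := gangle s A2 A1 A3 in
  let al3 := gangle s A3 A1 A2 in
  let del := pi - al1 - al2 - al3 in
  let g12 := gam s (gvec s A1 A2) in
  let g13 := gam s (gvec s A1 A3) in
  let g23 := gam s (gvec s A2 A3) in
  let m1 := (g12 + g13 - g23 - 1) * (g23 - 1) in
  let m2 := (g12 - g13 + g23 - 1) * (g13 - 1) in
  let m3 := (- g12 + g13 + g23 - 1) * (g12 - 1) in
  let den := m1 * gam s A1 + m2 * gam s A2 + m3 * gam s A3 in
  let O := den^-1 *: (m1 * gam s A1 *: A1 + m2 * gam s A2 *: A2
                      + m3 * gam s A3 *: A3) in
  let mO2 := m1 ^+ 2 + m2 ^+ 2 + m3 ^+ 2
             + 2 * (m1 * m2 * g12 + m1 * m3 * g13 + m2 * m3 * g23) in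
  let D3 := \det (gmat3 g12 g13 g23) in
  let H3 := 2 * (g12 - 1) * (g13 - 1) * (g23 - 1) in
  (* (i) *)
  (forall P, is_circumgyrocenter s A1 A2 A3 P -> P = O) /\
  (* (ii) *)
  (exists c : R, c != 0 /\
     m1 = c * (cos (al1 + del / 2) * sin al1) /\
     m2 = c * (cos (al2 + del / 2) * sin al2) /\
     m3 = c * (cos (al3 + del / 2) * sin al3)) /\
  (* (iii) *)
  (mO2 = ((g12 + g13 + g23 - 1) ^+ 2 - 2 * (g12 ^+ 2 + g13 ^+ 2 + g23 ^+ 2 - 1))
          * (1 + 2 * g12 * g13 * g23 - g12 ^+ 2 - g13 ^+ 2 - g23 ^+ 2) /\
   mO2 = D3 * (D3 - H3)) /\
  (* (iv) *)
  ((den != 0 /\ in_ball s O) <-> 0 < mO2) /\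
  (0 < mO2 <->
     3 * sin (del / 2) < sin (2 * al1 + del / 2) + sin (2 * al2 + del / 2)
                         + sin (2 * al3 + del / 2)) /\
  (0 < mO2 <->
     sin (del / 2) < sin (al1 + del / 2) * sin (al2 + del / 2) * sin (al3 + del / 2)) /\
  (0 < mO2 <->
     2 * (g12 ^+ 2 + g13 ^+ 2 + g23 ^+ 2 - 1) < (g12 + g13 + g23 - 1) ^+ 2) /\
  (0 < mO2 <->
     (g12 + g13 - g23 - 1) ^+ 2 < 4 * (g12 - 1) * (g13 - 1)).
Proof.
move=> _ s_gt0 h1 h2 h3 indep al1 al2 al3 del g12 g13 g23 m1 m2 m3 den O mO2 D3 H3.
have [g12_gt1 g13_gt1 g23_gt1] := gammas_gyro_gt1 s_gt0 h1 h2 h3 indep.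
have hD := gram_det_gyro_gt0 s_gt0 h1 h2 h3 indep.
have [eal1 eal2 eal3] := gangles_gyro s_gt0 h1 h2 h3 indep.
have [k k_gt0 [em1 em2 em3]] := gamma_angle_coords g12_gt1 g13_gt1 g23_gt1 hD.
rewrite -eal1 -eal2 -eal3 in em1 em2 em3.
have sum_m : m1 + m2 + m3
    = (g12 + g13 + g23 - 1) ^+ 2 - 2 * (g12 ^+ 2 + g13 ^+ 2 + g23 ^+ 2 - 1).
  by rewrite /m1 /m2 /m3; ring.
have mO2E : mO2 = (m1 + m2 + m3) * gram_det g12 g13 g23.
  by rewrite /mO2 /m1 /m2 /m3 /gram_det; ring.
have mO2_gt0 : 0 < mO2 <-> 0 < m1 + m2 + m3 by rewrite mO2E pmulr_lgt0.
have sum_iff := defect_sum_gt0 k_gt0 em1 em2 em3.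
have prod_iff := @defect_prod_iff R al1 al2 al3 (del / 2).
split; first exact: circumgyrocenter_gbary.
split; first by exists k; split; rewrite ?lt0r_neq0.
split; first by rewrite mO2E sum_m /D3 /H3 det_gmat3 /gram_det; split; ring.
split; first exact: in_ball_gbary.
split; first exact: iff_trans mO2_gt0 sum_iff.
split.
  by apply: iff_trans (iff_trans mO2_gt0 sum_iff) _; apply: prod_iff; rewrite /del; lra.
split; first by apply: iff_trans mO2_gt0 _; rewrite sum_m subr_gt0.
by apply: iff_trans mO2_gt0 _; rewrite sum_m; split=> h; lra.
Qed.
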